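(* Let $a,b>0$. (i) If $0\le v\le 1/2$ and $a\ge b$, then $L(a,b)\le \frac{1}{2}A_v(a,b)+\frac{1}{2}G_v(a,b)$. (ii) If $1/2\le v\le 1$ and $a\le b$, then $L(a,b)\le \frac{1}{2}A_v(a,b)+\frac{1}{2}G_v(a,b)$.
   Context: For $a,b>0$ and $0\le v\le 1$: $A_v(a,b):=(1-v)a+vb$, $G_v(a,b):=a^{1-v}b^v$, and the logarithmic mean $L(a,b):=\frac{a-b}{\log a-\log b}$ for $a\neq b$, $L(a,a):=a$. *)

From Stdlib Require Import Reals.
Open Scope R_scope.

Definition Amean (v a b : R) : R := (1 - v) * a + v * b.

Definition Gmean (v a b : R) : R := Rpower a (1 - v) * Rpower b v.

Definition Lmean (a b : R) : R :=
  if Req_EM_T a b then a else (a - b) / (ln a - ln b).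

(** For [b < a] put [x = sqrt a], [y = sqrt b].  The bound
    [ln r >= 2 (r - 1) / (r + 1)] at [r = x / y] gives
    [ln a - ln b >= 4 (x - y) / (x + y)], i.e. [L(a,b) <= ((x + y) / 2)^2],
    and [((x + y) / 2)^2] is exactly [(A_{1/2} + G_{1/2}) / 2].  When [b <= a]
    both [A_v] and [G_v] decrease in [v], so for [v <= 1/2] the right-hand side
    only grows.  Part (ii) is part (i) with [a], [b] swapped and [v] replaced
    by [1 - v]. *)

From Stdlib Require Import Reals Lra Psatz.
From Coquelicot Require Import Coquelicot.
Open Scope R_scope.

Lemma ln_ge_2_mul_sub1_div_add1 (r : R) :
  1 < r -> 2 * (r - 1) / (r + 1) <= ln r.
Proof.
  intros Hr.
  set (f := fun t => ln t - 2 * (t - 1) / (t + 1)).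
  set (f' := fun t => (t - 1) ^ 2 / (t * (t + 1) ^ 2)).
  destruct (MVT_cor2 f f' 1 r Hr) as [c [Hfc Hc]].
  { intros t Ht. apply is_derive_Reals. unfold f, f'.
    auto_derive; [lra |]. field. lra. }
  assert (Hf1 : f 1 = 0) by (unfold f; rewrite ln_1; field).
  assert (Hf'c : 0 <= f' c).
  { unfold f'. apply Rdiv_le_0_compat; [nra |].
    apply Rmult_lt_0_compat; [lra | nra]. }
  assert (0 <= f r) by nra.
  unfold f in *. lra.
Qed.

Lemma Lmean_sym (a b : R) : Lmean a b = Lmean b a.
Proof.
  unfold Lmean.
  destruct (Req_EM_T a b) as [Hab | Hab], (Req_EM_T b a) as [Hba | Hba];
    [exact Hab | congruence | congruence |].
  replace (b - a) with (- (a - b)) by ring.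
  replace (ln b - ln a) with (- (ln a - ln b)) by ring.
  destruct (Req_dec (ln a - ln b) 0) as [-> | Hln].
  - now rewrite Ropp_0, !Rdiv_0_r.
  - field. exact Hln.
Qed.

Lemma Lmean_le_sqr_mean_sqrt_lt (a b : R) :
  0 < b < a -> Lmean a b <= ((sqrt a + sqrt b) / 2) ^ 2.
Proof.
  intros [Hb Hba].
  unfold Lmean. destruct (Req_EM_T a b) as [Heq | _]; [lra |].
  set (x := sqrt a). set (y := sqrt b).
  assert (Hy0 : 0 < y) by (apply sqrt_lt_R0; lra).
  assert (Hyx : y < x) by (apply sqrt_lt_1_alt; lra).
  assert (Ea : a = x * x) by (symmetry; apply sqrt_sqrt; lra).
  assert (Eb : b = y * y) by (symmetry; apply sqrt_sqrt; lra).
  assert (Hr : 1 < x / y) by (apply Rlt_div_r; lra).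
  assert (Hln : ln a - ln b = 2 * ln (x / y)).
  { rewrite Ea, Eb, !ln_mult, ln_div by lra. ring. }
  assert (Hbound := ln_ge_2_mul_sub1_div_add1 _ Hr).
  replace (2 * (x / y - 1) / (x / y + 1)) with (2 * (x - y) / (x + y))
    in Hbound by (field; lra).
  assert (Hdiff : 4 * (x - y) / (x + y) <= ln a - ln b) by lra.
  assert (Hpos : 0 < 4 * (x - y) / (x + y))
    by (apply Rdiv_lt_0_compat; lra).
  apply Rle_div_l; [lra |].
  apply Rle_trans with (((x + y) / 2) ^ 2 * (4 * (x - y) / (x + y))).
  - right. rewrite Ea, Eb. field. lra.
  - apply Rmult_le_compat_l; [nra | exact Hdiff].
Qed.

Lemma Lmean_le_sqr_mean_sqrt (a b : R) :
  0 < a -> 0 < b -> Lmean a b <= ((sqrt a + sqrt b) / 2) ^ 2.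
Proof.
  intros Ha Hb.
  destruct (Rtotal_order a b) as [Hab | [<- | Hba]].
  - rewrite Lmean_sym, (Rplus_comm (sqrt a)).
    apply Lmean_le_sqr_mean_sqrt_lt; lra.
  - unfold Lmean. destruct (Req_EM_T a a) as [_ | ]; [| congruence].
    rewrite <- (sqrt_sqrt a) at 1 by lra. right. field.
  - apply Lmean_le_sqr_mean_sqrt_lt; lra.
Qed.

Lemma Amean_swap (v a b : R) : Amean v a b = Amean (1 - v) b a.
Proof. unfold Amean. ring. Qed.

Lemma Gmean_swap (v a b : R) : Gmean v a b = Gmean (1 - v) b a.
Proof.
  unfold Gmean. replace (1 - (1 - v)) with v by ring. apply Rmult_comm.
Qed.

Lemma Gmean_exp (v a b : R) : Gmean v a b = exp (ln a - v * (ln a - ln b)).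
Proof.
  unfold Gmean, Rpower. rewrite <- exp_plus. f_equal. ring.
Qed.

Lemma Amean_half_add_Gmean_half (a b : R) : 0 < a -> 0 < b ->
  1/2 * Amean (1/2) a b + 1/2 * Gmean (1/2) a b = ((sqrt a + sqrt b) / 2) ^ 2.
Proof.
  intros Ha Hb.
  unfold Amean, Gmean. replace (1 - 1/2) with (/ 2) by field.
  replace (1/2) with (/ 2) by field.
  rewrite !Rpower_sqrt by assumption.
  rewrite <- (sqrt_sqrt a) at 1 by lra. rewrite <- (sqrt_sqrt b) at 1 by lra.
  field.
Qed.

Lemma Amean_antitone (v w a b : R) :
  b <= a -> v <= w -> Amean w a b <= Amean v a b.
Proof. intros Hba Hvw. unfold Amean. nra. Qed.

Lemma Gmean_antitone (v w a b : R) :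
  0 < b <= a -> v <= w -> Gmean w a b <= Gmean v a b.
Proof.
  intros Hba Hvw. rewrite !Gmean_exp.
  assert (Hln : ln b <= ln a) by (apply ln_le; lra).
  destruct (Rle_lt_or_eq_dec (ln a - w * (ln a - ln b)) (ln a - v * (ln a - ln b)))
    as [Hlt | ->]; [nra | now apply Rlt_le, exp_increasing | apply Rle_refl].
Qed.

Lemma Lmean_le_Amean_Gmean (v a b : R) : 0 < b <= a -> v <= 1/2 ->
  Lmean a b <= 1/2 * Amean v a b + 1/2 * Gmean v a b.
Proof.
  intros Hba Hv.
  apply Rle_trans with (1/2 * Amean (1/2) a b + 1/2 * Gmean (1/2) a b).
  - rewrite Amean_half_add_Gmean_half by lra.
    apply Lmean_le_sqr_mean_sqrt; lra.
  - assert (HA := Amean_antitone v (1/2) a b (proj2 Hba) Hv).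
    assert (HG := Gmean_antitone v (1/2) a b Hba Hv).
    lra.
Qed.

Theorem proposition3p1 (a b : R) (ha : 0 < a) (hb : 0 < b) :
  (forall v : R, 0 <= v <= 1/2 -> b <= a ->
     Lmean a b <= 1/2 * Amean v a b + 1/2 * Gmean v a b) /\
  (forall v : R, 1/2 <= v <= 1 -> a <= b ->
     Lmean a b <= 1/2 * Amean v a b + 1/2 * Gmean v a b).
Proof.
  split; intros v Hv Hab.
  - apply Lmean_le_Amean_Gmean; lra.
  - rewrite Lmean_sym, Amean_swap, Gmean_swap.
    apply Lmean_le_Amean_Gmean; lra.
Qed.
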